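(* Let $r\ge1$, let $\mathcal{A}:\mathbb{C}^{m\times n}\to\mathbb{C}^p$ be linear with $\delta_{4r}(\mathcal{A})\le0.04$, let $X_0\in\mathbb{C}^{m\times n}$ with $\mathrm{rank}(X_0)\le r$, let $\nu\in\mathbb{C}^p$ and $b=\mathcal{A}X_0+\nu$. Let $\widehat{X}\in\mathbb{C}^{m\times n}$ with $\mathrm{rank}(\widehat{X})\le r$, and let $\Psi'$ be any maximizer of $\|\mathcal{P}_\Psi\mathcal{A}^*(b-\mathcal{A}\widehat{X})\|_F$ over $\Psi\subset\mathbb{O}$ with $|\Psi|\le2r$. Then $$\|\mathcal{P}_{\Psi'}^\perp(X_0-\widehat{X})\|_F\le0.24\|X_0-\widehat{X}\|_F+2.13\|\nu\|_2.$$
   Context: $\mathbb{C}^p$ has inner product $\langle x,y\rangle=y^Hx$ and norm $\|\cdot\|_2$; $\mathbb{C}^{m\times n}$ has inner product $\langle X,Y\rangle=\mathrm{tr}(Y^HX)$ and Frobenius norm $\|\cdot\|_F$; $\mathcal{A}^*$ is the adjoint of $\mathcal{A}$. $\delta_s(\mathcal{A})$ is the smallest $\delta\ge0$ such that $(1-\delta)\|X\|_F^2\le\|\mathcal{A}X\|_2^2\le(1+\delta)\|X\|_F^2$ for all $X$ with $\mathrm{rank}(X)\le s$. The set of atoms $\mathbb{O}$ is a set of unit-Frobenius-norm rank-one matrices such that every nonzero rank-one matrix is a scalar multiple of exactly one element of $\mathbb{O}$. For $\Psi\subset\mathbb{O}$, $\mathcal{P}_\Psi$ is the orthogonal projection onto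 $\mathrm{span}(\Psi)$ and $\mathcal{P}_\Psi^\perp=I-\mathcal{P}_\Psi$. (In the paper, $\widehat{X}$ is the previous ADMiRA estimate, which has rank at most $r$.) *)

From HB Require Import structures.
From mathcomp Require Import all_boot all_order all_algebra.
From mathcomp Require Import complex.
From mathcomp Require Import reals.
From Stdlib Require Import ClassicalEpsilon.
Set Implicit Arguments. Unset Strict Implicit. Unset Printing Implicit Defensive.
Import Order.TTheory GRing.Theory Num.Theory.
Local Open Scope ring_scope.

Section Defs.
Variable C : numClosedFieldType.

Definition vdot p (x y : 'cV[C]_p) : C := \sum_(k < p) x k 0 * (y k 0)^*.
Definition mdot m n (X Y : 'M[C]_(m, n)) : C := \tr ((map_mx Num.conj Y)^T *m X).
Definition vnorm p (x : 'cV[C]_p) : C := sqrtC (vdot x x).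
Definition fnorm m n (X : 'M[C]_(m, n)) : C := sqrtC (mdot X X).

Definition is_adjoint m n p (A : 'M[C]_(m, n) -> 'cV[C]_p)
  (Astar : 'cV[C]_p -> 'M[C]_(m, n)) : Prop :=
  forall X y, vdot (A X) y = mdot X (Astar y).

Definition rip_bound m n p (A : 'M[C]_(m, n) -> 'cV[C]_p) (s : nat) (d : C) : Prop :=
  forall X : 'M[C]_(m, n), (\rank X <= s)%N ->
    (1 - d) * fnorm X ^+ 2 <= vnorm (A X) ^+ 2 <= (1 + d) * fnorm X ^+ 2.

(* delta_s(A) = smallest d >= 0 with rip_bound; "delta_s(A) <= c" *)
Definition ric_le m n p (A : 'M[C]_(m, n) -> 'cV[C]_p) (s : nat) (c : C) : Prop :=
  exists d, [/\ 0 <= d, d <= c, rip_bound A s d &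
     forall d', 0 <= d' -> rip_bound A s d' -> d <= d'].

Definition atoms m n (O : 'M[C]_(m, n) -> Prop) : Prop :=
  (forall W, O W -> \rank W = 1%N /\ fnorm W = 1) /\
  (forall X : 'M[C]_(m, n), \rank X = 1%N ->
     exists! W, O W /\ exists c : C, X = c *: W).

Definition is_orth_proj m n (U : {vspace 'M[C]_(m, n)}) (Z Y : 'M[C]_(m, n)) : Prop :=
  Y \in U /\ forall W, W \in U -> mdot (Z - Y) W = 0.

Definition proj m n (U : {vspace 'M[C]_(m, n)}) (Z : 'M[C]_(m, n)) : 'M[C]_(m, n) :=
  epsilon (inhabits 0) (is_orth_proj U Z).

(* P_Psi and P_Psi^perp for a finite Psi given as a duplicate-free list *)
Definition P_ m n (Psi : seq 'M[C]_(m, n)) (Z : 'M[C]_(m, n)) := proj <<Psi>>%VS Z.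
Definition Pperp m n (Psi : seq 'M[C]_(m, n)) (Z : 'M[C]_(m, n)) := Z - P_ Psi Z.

Definition admissible m n (O : 'M[C]_(m, n) -> Prop) (k : nat) (Psi : seq 'M[C]_(m, n)) :=
  [/\ uniq Psi, (forall W, W \in Psi -> O W) & (size Psi <= k)%N].

End Defs.

From HB Require Import structures.
From mathcomp Require Import all_boot all_order all_algebra.
From mathcomp Require Import complex.
From mathcomp Require Import reals.
From mathcomp Require Import ring lra.
From Stdlib Require Import ClassicalEpsilon.
Set Implicit Arguments.
Unset Strict Implicit.
Unset Printing Implicit Defensive.

Import Order.TTheory GRing.Theory Num.Theory.
Local Open Scope ring_scope.

(* Let D = X0 - Xh, of rank <= 2r, so D lies in the span of a set Psi0 of at
   most 2r atoms, and let T = Psi' ++ Psi0.  Every matrix in span(T) has rank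
   <= 4r, so A is a near-isometry there.  With Y = A^*(b - A Xh) = A^*(A D + nu)
   and Z = P_T Y, the error E = Z - D lies in span(T) and satisfies
   |E|^2 = (<A E, A D> - <E, D>) + <A E, nu> <= d |E| |D| + sqrt(1 + d) |E| |nu|,
   hence |Z - D| <= d |D| + sqrt(1 + d) |nu|.  Maximality of Psi' gives
   |P_Psi' Y| >= |P_Psi0 Y|, so by Pythagoras in span(T)
   |Z - P_Psi' Y| <= |Z - P_Psi0 Y| <= |Z - D|, and therefore
   |P_Psi'^perp D| <= |D - P_Psi' Y| <= 2 |Z - D|; with d <= 0.04 this is
   at most 0.08 |D| + 2.04 |nu|.  All estimates use the real inner product
   Re <X, Y>, which induces the Frobenius norm. *)

Section FrobeniusInner.
Variables (C : numClosedFieldType) (m n : nat).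
Implicit Types (X Y Z W : 'M[C]_(m, n)) (a : C).

Lemma mdotE X Y : mdot X Y = \sum_(j < n) \sum_(i < m) X i j * (Y i j)^*.
Proof.
rewrite /mdot /mxtrace; apply: eq_bigr => j _; rewrite !mxE.
by apply: eq_bigr => i _; rewrite !mxE mulrC.
Qed.

Lemma mdotDl X Y Z : mdot (X + Y) Z = mdot X Z + mdot Y Z.
Proof.
rewrite !mdotE -big_split; apply: eq_bigr => j _; rewrite -big_split.
by apply: eq_bigr => i _; rewrite mxE mulrDl.
Qed.

Lemma mdotZl a X Z : mdot (a *: X) Z = a * mdot X Z.
Proof.
rewrite !mdotE mulr_sumr; apply: eq_bigr => j _; rewrite mulr_sumr.
by apply: eq_bigr => i _; rewrite mxE mulrA.
Qed.

Lemma mdotC X Y : mdot Y X = (mdot X Y)^*.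
Proof.
rewrite !mdotE rmorph_sum; apply: eq_bigr => j _; rewrite rmorph_sum.
by apply: eq_bigr => i _; rewrite rmorphM /= conjCK mulrC.
Qed.

Lemma mdotNl X Z : mdot (- X) Z = - mdot X Z.
Proof. by rewrite -scaleN1r mdotZl mulN1r. Qed.

Lemma mdotBl X Y Z : mdot (X - Y) Z = mdot X Z - mdot Y Z.
Proof. by rewrite mdotDl mdotNl. Qed.

Lemma mdotDr X Y Z : mdot Z (X + Y) = mdot Z X + mdot Z Y.
Proof. by rewrite mdotC mdotDl rmorphD /= -!mdotC. Qed.

Lemma mdotZr a X Z : mdot Z (a *: X) = a^* * mdot Z X.
Proof. by rewrite mdotC mdotZl rmorphM /= -mdotC. Qed.

Lemma mdot0r Z : mdot Z 0 = 0.
Proof. by rewrite -(scale0r 0) mdotZr conjC0 mul0r. Qed.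

Lemma mdot_ge0 X : 0 <= mdot X X.
Proof. by rewrite mdotE; do 2![apply: sumr_ge0 => ? _]; exact: mul_conjC_ge0. Qed.

Lemma mdot_eq0 X : mdot X X = 0 -> X = 0.
Proof.
have ge0 j : 0 <= \sum_(i < m) X i j * (X i j)^*.
  by apply: sumr_ge0 => i _; exact: mul_conjC_ge0.
rewrite mdotE => /psumr_eq0P X0; apply/matrixP => i j; rewrite mxE.
have /psumr_eq0P Xj := X0 (fun j _ => ge0 j) j isT.
apply/eqP; rewrite -mul_conjC_eq0; apply/eqP/Xj => // ? _; exact: mul_conjC_ge0.
Qed.

Lemma orth_proj_exists (s : seq 'M[C]_(m, n)) Z : exists Y, is_orth_proj <<s>>%VS Z Y.
Proof.
elim: s Z => [|x s IHs] Z.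
  exists 0; split=> [|W]; first exact: mem0v.
  by rewrite span_nil memv0 => /eqP ->; rewrite mdot0r.
have [Y [Ys YZ]] := IHs Z; have [Yx [Yxs Yxx]] := IHs x.
have sub_s : (<<s>> <= <<x :: s>>)%VS.
  by apply: sub_span => w w_s; rewrite inE w_s orbT.
set x' := x - Yx.
have x'_s : x' \in <<x :: s>>%VS.
  by apply: memvB; [exact/memv_span/mem_head | exact: (subvP sub_s)].
have [x'0|x'n0] := eqVneq (mdot x' x') 0.
  have xYx : x = Yx by apply/eqP; rewrite -subr_eq0; apply/eqP/mdot_eq0.
  exists Y; split; first exact: (subvP sub_s).
  move=> W; rewrite span_cons => /memv_addP [_ /vlineP [k ->] [w w_s ->]].
  by rewrite mdotDr mdotZr xYx !YZ // mulr0 add0r.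
(* Gram-Schmidt step: [x'] is the part of [x] orthogonal to [<<s>>]. *)
pose c := mdot (Z - Y) x' / mdot x' x'.
have perp_s w : w \in <<s>>%VS -> mdot (Z - (Y + c *: x')) w = 0.
  by move=> w_s; rewrite opprD addrA mdotBl YZ // mdotZl /x' Yxx // mulr0 subr0.
exists (Y + c *: x'); split; first by apply: memvD; [exact: (subvP sub_s) | exact: memvZ].
move=> W; rewrite span_cons => /memv_addP [_ /vlineP [k ->] [w w_s ->]].
rewrite mdotDr (perp_s w) // addr0 mdotZr -(subrK Yx x) -/x' mdotDr (perp_s Yx) // addr0.
by rewrite opprD addrA mdotBl mdotZl /c divfK // subrr mulr0.
Qed.

Lemma P_spec (s : seq 'M[C]_(m, n)) Z : is_orth_proj <<s>>%VS Z (P_ s Z).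
Proof.
have [Y YZ] := orth_proj_exists s Z.
exact: (epsilon_spec (inhabits 0) _ (ex_intro _ Y YZ)).
Qed.

End FrobeniusInner.

Section RankOneSums.
Variables (F : fieldType) (m n : nat).

Lemma mxrank_sum_le I (r : seq I) (P : pred I) (G : I -> 'M[F]_(m, n)) :
  (\rank (\sum_(i <- r | P i) G i)%R <= \sum_(i <- r | P i) \rank (G i))%N.
Proof.
apply: (big_ind2 (fun (A : 'M_(m, n)) a => \rank A <= a)%N) => // [|A a B b rA rB].
  by rewrite mxrank0.
exact: leq_trans (mxrank_add A B) (leq_add rA rB).
Qed.

Lemma mxrank_span_le (s : seq 'M[F]_(m, n)) W :
  (forall w, w \in s -> \rank w <= 1)%N -> W \in <<s>>%VS -> (\rank W <= size s)%N.
Proof.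
move=> s1 W_s; rewrite (coord_span (X := in_tuple s) W_s).
apply: leq_trans (mxrank_sum_le _ _ _) _.
apply: (@leq_trans (\sum_(i < size s) 1)); last by rewrite sum1_card card_ord.
apply: leq_sum => i _; apply: leq_trans (mxrank_scale _ _) _.
by rewrite s1 // mem_nth.
Qed.

Lemma mulmx_sum_col_row k (A : 'M[F]_(m, k)) (B : 'M[F]_(k, n)) :
  A *m B = \sum_(i < k) col i A *m row i B.
Proof.
apply/matrixP => a b; rewrite !mxE summxE; apply: eq_bigr => i _.
by rewrite !mxE big_ord1 !mxE.
Qed.

Lemma mxrank_rank1_decomp (X : 'M[F]_(m, n)) :
  exists G : 'I_(\rank X) -> 'M[F]_(m, n),
    (forall i, \rank (G i) <= 1)%N /\ X = \sum_(i < \rank X) G i.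
Proof.
exists (fun i => col i (col_base X) *m row i (row_base X)); split.
  by move=> i; apply: leq_trans (mxrankM_maxl _ _) _; exact: rank_leq_col.
by rewrite -mulmx_sum_col_row mulmx_base.
Qed.

End RankOneSums.

Section Atoms.
Variables (C : numClosedFieldType) (m n : nat) (O : 'M[C]_(m, n) -> Prop).
Hypothesis O_atoms : atoms O.

Lemma atoms_cover_sum k (G : 'I_k -> 'M[C]_(m, n)) : (forall i, \rank (G i) <= 1)%N ->
  exists Psi, admissible O k Psi /\ \sum_(i < k) G i \in <<Psi>>%VS.
Proof.
have [_ O1] := O_atoms.
elim: k G => [|k IHk] G G1; first by exists [::]; rewrite big_ord0 mem0v.
have [Psi [[uPsi OPsi szPsi] sumPsi]] := IHk _ (fun i => G1 (widen_ord (leqnSn k) i)).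
rewrite big_ord_recr /=.
have [G0|Gn0] := eqVneq (G ord_max) 0.
  by exists Psi; rewrite G0 addr0; split=> //; split=> //; exact: ltnW.
have G_rank1 : \rank (G ord_max) = 1%N.
  by apply/eqP; rewrite eqn_leq G1 lt0n mxrank_eq0.
have [W [[OW [c ->]] _]] := O1 _ G_rank1.
have [W_Psi|W_Psi] := boolP (W \in Psi).
  exists Psi; split; first by split=> //; exact: ltnW.
  by rewrite memvD // memvZ // memv_span.
exists (W :: Psi); split; first split.
- by rewrite cons_uniq W_Psi.
- by move=> W'; rewrite inE => /predU1P [->|/OPsi].
- by [].
apply: memvD; last by rewrite memvZ // memv_span ?mem_head.
by apply: subvP sumPsi; apply: sub_span => w w_Psi; rewrite inE w_Psi orbT.
Qed.

Lemma atoms_cover X : exists Psi, admissible O (\rank X) Psi /\ X \in <<Psi>>%VS.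
Proof.
have [G [G1 XG]] := mxrank_rank1_decomp X.
have [Psi [adm_Psi sum_Psi]] := atoms_cover_sum G1.
by exists Psi; split=> //; rewrite XG.
Qed.

End Atoms.

Section ComplexRe.
Variable R : rcfType.
Implicit Types (x y : R[i]) (a : R).

Lemma ReD_complex x y : complex.Re (x + y) = complex.Re x + complex.Re y.
Proof. by case: x => ? ?; case: y => ? ?; reflexivity. Qed.

Lemma ReN_complex x : complex.Re (- x) = - complex.Re x.
Proof. by case: x => ? ?; reflexivity. Qed.

Lemma ReJ_complex x : complex.Re x^* = complex.Re x.
Proof. by case: x => ? ?; reflexivity. Qed.

Lemma ReM_real a x : complex.Re (a%:C%C * x) = a * complex.Re x.
Proof. by case: x => u v /=; rewrite mul0r subr0. Qed.

Lemma ge0_Re_real x : 0 <= x -> x = (complex.Re x)%:C%C.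
Proof. by move=> x_ge0; rewrite RRe_real // ger0_real. Qed.

Lemma sqrtC_real_complex a : 0 <= a -> sqrtC a%:C%C = (Num.sqrt a)%:C%C.
Proof.
move=> a_ge0; rewrite -[a in LHS]sqr_sqrtr // rmorphXn /= sqrCK //.
by rewrite ler0c sqrtr_ge0.
Qed.

End ComplexRe.

(* Locked, so that failing unifications do not unfold [mdot] (very slow). *)
HB.lock Definition rdot (R : rcfType) m n (X Y : 'M[R[i]]_(m, n)) : R :=
  complex.Re (mdot X Y).
HB.lock Definition fnormR (R : rcfType) m n (X : 'M[R[i]]_(m, n)) : R :=
  Num.sqrt (rdot X X).

Section RealInner.
Variables (R : rcfType) (m n : nat).
Implicit Types (X Y Z V P W : 'M[R[i]]_(m, n)) (a : R).

Lemma rdotC X Y : rdot Y X = rdot X Y.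
Proof. by rewrite rdot.unlock mdotC ReJ_complex. Qed.

Lemma rdotDl X Y Z : rdot (X + Y) Z = rdot X Z + rdot Y Z.
Proof. by rewrite rdot.unlock mdotDl ReD_complex. Qed.

Lemma rdotBl X Y Z : rdot (X - Y) Z = rdot X Z - rdot Y Z.
Proof. by rewrite rdot.unlock mdotBl ReD_complex ReN_complex. Qed.

Lemma rdotZl a X Y : rdot (a%:C%C *: X) Y = a * rdot X Y.
Proof. by rewrite rdot.unlock mdotZl ReM_real. Qed.

Lemma rdotDr X Y Z : rdot Z (X + Y) = rdot Z X + rdot Z Y.
Proof. by rewrite rdotC rdotDl !(rdotC Z). Qed.

Lemma rdotBr X Y Z : rdot Z (X - Y) = rdot Z X - rdot Z Y.
Proof. by rewrite rdotC rdotBl !(rdotC Z). Qed.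

Lemma rdotZr a X Y : rdot Y (a%:C%C *: X) = a * rdot Y X.
Proof. by rewrite rdotC rdotZl rdotC. Qed.

Lemma rdot0r X : rdot X 0 = 0.
Proof. by rewrite -(scale0r 0) -[0 : R[i]]/(0%:C%C) rdotZr mul0r. Qed.

Lemma rdot0l X : rdot 0 X = 0.
Proof. by rewrite rdotC rdot0r. Qed.

Lemma rdot_self X : mdot X X = (rdot X X)%:C%C.
Proof. by rewrite rdot.unlock; exact/ge0_Re_real/mdot_ge0. Qed.

Lemma rdot_ge0 X : 0 <= rdot X X.
Proof. by rewrite -ler0c -rdot_self mdot_ge0. Qed.

Lemma fnormR_ge0 X : 0 <= fnormR X. Proof. by rewrite fnormR.unlock sqrtr_ge0. Qed.

Lemma sqr_fnormR X : fnormR X ^+ 2 = rdot X X.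
Proof. by rewrite fnormR.unlock sqr_sqrtr ?rdot_ge0. Qed.

Lemma fnormE X : fnorm X = (fnormR X)%:C%C.
Proof. by rewrite /fnorm rdot_self fnormR.unlock sqrtC_real_complex ?rdot_ge0. Qed.

Lemma fnormR_eq0 X : fnormR X = 0 -> X = 0.
Proof. by move=> X0; apply: mdot_eq0; rewrite rdot_self -sqr_fnormR X0 expr0n. Qed.

Lemma sqr_fnormRD X Y :
  fnormR (X + Y) ^+ 2 = fnormR X ^+ 2 + fnormR Y ^+ 2 + 2 * rdot X Y.
Proof. rewrite !sqr_fnormR rdotDl !rdotDr (rdotC X Y); ring. Qed.

Lemma sqr_fnormRB X Y :
  fnormR (X - Y) ^+ 2 = fnormR X ^+ 2 + fnormR Y ^+ 2 - 2 * rdot X Y.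
Proof. rewrite !sqr_fnormR rdotBl !rdotBr (rdotC X Y); ring. Qed.

Lemma sqr_fnormRZ a X : fnormR (a%:C%C *: X) ^+ 2 = a ^+ 2 * fnormR X ^+ 2.
Proof. by rewrite !sqr_fnormR rdotZl rdotZr mulrA -expr2. Qed.

Lemma rdot_le_fnormR X Y : rdot X Y <= fnormR X * fnormR Y.
Proof.
have [Y0|Yn0] := eqVneq (fnormR Y) 0.
  by rewrite Y0 mulr0 (fnormR_eq0 Y0) rdot0r.
have Y_gt0 : 0 < fnormR Y ^+ 2 by rewrite exprn_gt0 // lt_def Yn0 fnormR_ge0.
(* Cauchy-Schwarz: expand [0 <= |X - t Y|^2] at the minimizing [t]. *)
pose t := rdot X Y / fnormR Y ^+ 2.
have tY : rdot X Y = t * fnormR Y ^+ 2 by rewrite divfK // gt_eqF.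
have := sqr_ge0 (fnormR (X - t%:C%C *: Y)).
rewrite sqr_fnormRB !sqr_fnormR rdotZl rdotZr rdotZr -!sqr_fnormR => sq_ge0.
have sq_le : rdot X Y ^+ 2 <= (fnormR X * fnormR Y) ^+ 2.
  rewrite -subr_ge0; have := mulr_ge0 sq_ge0 (ltW Y_gt0).
  by congr (0 <= _); rewrite tY; ring.
have [XY_lt0|XY_ge0] := ltrP (rdot X Y) 0.
  by rewrite (le_trans (ltW XY_lt0)) ?mulr_ge0 ?fnormR_ge0.
by rewrite -ler_sqr ?nnegrE ?mulr_ge0 ?fnormR_ge0.
Qed.

Lemma rdotNr X Y : rdot Y (- X) = - rdot Y X.
Proof. by rewrite -sub0r rdotBr rdot0r sub0r. Qed.

Lemma fnormRN X : fnormR (- X) = fnormR X.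
Proof. by rewrite fnormR.unlock rdotNr rdotC rdotNr opprK. Qed.

Lemma fnormRB_le X Y : fnormR (X - Y) <= fnormR X + fnormR Y.
Proof.
rewrite -ler_sqr ?nnegrE ?addr_ge0 ?fnormR_ge0 // sqr_fnormRB.
have := rdot_le_fnormR X (- Y); rewrite rdotNr fnormRN sqrrD; lra.
Qed.

Section Orthogonal.
Variables (U : {vspace 'M[R[i]]_(m, n)}) (V P : 'M[R[i]]_(m, n)).
Hypotheses (P_U : P \in U) (VP_perp : forall W, W \in U -> rdot (V - P) W = 0).

Lemma sqr_fnormR_orth : fnormR V ^+ 2 = fnormR P ^+ 2 + fnormR (V - P) ^+ 2.
Proof. by rewrite -{1}(subrK P V) [LHS]sqr_fnormRD (VP_perp P_U) mulr0 addr0 addrC. Qed.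

Lemma fnormR_orth_min W : W \in U -> fnormR (V - P) <= fnormR (V - W).
Proof.
move=> W_U; rewrite -ler_sqr ?nnegrE ?fnormR_ge0 //.
have -> : V - W = (V - P) + (P - W) by rewrite addrA subrK.
rewrite (sqr_fnormRD (V - P)) (VP_perp (memvB P_U W_U)) mulr0 addr0.
by rewrite lerDl sqr_ge0.
Qed.

End Orthogonal.

Lemma P_mem (s : seq 'M[R[i]]_(m, n)) Z : P_ s Z \in <<s>>%VS.
Proof. by have [] := P_spec s Z. Qed.

Lemma rdot_P_perp (s : seq 'M[R[i]]_(m, n)) Z W :
  W \in <<s>>%VS -> rdot (Z - P_ s Z) W = 0.
Proof. by have [_ perp] := P_spec s Z => /perp; rewrite rdot.unlock => ->. Qed.

Lemma rdot_P_sub_perp (s t : seq 'M[R[i]]_(m, n)) Z W : (<<s>> <= <<t>>)%VS ->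
  W \in <<s>>%VS -> rdot (P_ t Z - P_ s Z) W = 0.
Proof.
move=> st W_s.
have -> : P_ t Z - P_ s Z = (Z - P_ s Z) - (Z - P_ t Z) by rewrite [RHS]addrC opprB addrA subrK.
by rewrite rdotBl !rdot_P_perp ?subrr // (subvP st).
Qed.

Lemma fnormR_Pperp_greedy (s s0 t : seq 'M[R[i]]_(m, n)) Y D :
  (<<s>> <= <<t>>)%VS -> (<<s0>> <= <<t>>)%VS -> D \in <<s0>>%VS ->
  fnormR (P_ s0 Y) <= fnormR (P_ s Y) ->
  fnormR (Pperp s D) <= 2 * fnormR (P_ t Y - D).
Proof.
move=> st s0t D_s0 greedy; set Z := P_ t Y.
have perp_s := rdot_P_sub_perp Y st; have perp_s0 := rdot_P_sub_perp Y s0t.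
have Zs_le : fnormR (Z - P_ s Y) <= fnormR (Z - P_ s0 Y).
  rewrite -ler_sqr ?nnegrE ?fnormR_ge0 // -(lerD2l (fnormR (P_ s Y) ^+ 2)).
  rewrite -(sqr_fnormR_orth (P_mem s Y) perp_s) (sqr_fnormR_orth (P_mem s0 Y) perp_s0).
  by rewrite lerD2r ler_sqr ?nnegrE ?fnormR_ge0.
have Zs0_le := fnormR_orth_min (P_mem s0 Y) perp_s0 D_s0.
have Ds_le := fnormR_orth_min (P_mem s D) (@rdot_P_perp s D) (P_mem s Y).
have tri : fnormR (D - P_ s Y) <= fnormR (Z - P_ s Y) + fnormR (Z - D).
  have -> : D - P_ s Y = (Z - P_ s Y) - (Z - D) by rewrite [RHS]addrC opprB addrA subrK.
  exact: fnormRB_le.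
rewrite /Pperp (le_trans Ds_le) // (le_trans tri) // mulr_natl mulr2n lerD //.
exact: le_trans Zs_le Zs0_le.
Qed.

End RealInner.

Lemma ler_of_sqr_le_mul (R : realDomainType) (e K : R) :
  0 <= K -> e ^+ 2 <= e * K -> e <= K.
Proof.
move=> K_ge0; have [e_le0|e_gt0] := lerP e 0; first by rewrite (le_trans e_le0).
by rewrite expr2 ler_pM2l.
Qed.

Definition rip_on (R : rcfType) m n p (A : 'M[R[i]]_(m, n) -> 'cV[R[i]]_p)
    (U : {vspace 'M[R[i]]_(m, n)}) (d : R) :=
  forall X, X \in U ->
    (1 - d) * fnormR X ^+ 2 <= fnormR (A X) ^+ 2 <= (1 + d) * fnormR X ^+ 2.

Lemma rip_on_span (R : rcfType) m n p (A : 'M[R[i]]_(m, n) -> 'cV[R[i]]_p)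
    (O : 'M[R[i]]_(m, n) -> Prop) (t : seq 'M[R[i]]_(m, n)) (d : R) s :
  atoms O -> (forall w, w \in t -> O w) -> (size t <= s)%N ->
  (forall X, (\rank X <= s)%N ->
    (1 - d) * fnormR X ^+ 2 <= fnormR (A X) ^+ 2 <= (1 + d) * fnormR X ^+ 2) ->
  rip_on A <<t>> d.
Proof.
move=> [O1 _] t_O t_s A_rip X X_t; apply: A_rip.
by apply: leq_trans (mxrank_span_le _ X_t) t_s => w /t_O /O1 [->].
Qed.

Section RestrictedIsometry.
Variables (R : rcfType) (m n p : nat) (A : {linear 'M[R[i]]_(m, n) -> 'cV[R[i]]_p}).
Variables (U : {vspace 'M[R[i]]_(m, n)}) (d : R).
Hypotheses (d_ge0 : 0 <= d) (A_rip : rip_on A U d).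

Lemma fnormR_rip_le X : X \in U -> fnormR (A X) <= Num.sqrt (1 + d) * fnormR X.
Proof.
move=> X_U; have /andP [_ AX_le] := A_rip X_U.
rewrite -ler_sqr ?nnegrE ?mulr_ge0 ?sqrtr_ge0 ?fnormR_ge0 //.
by rewrite exprMn sqr_sqrtr // addr_ge0.
Qed.

Lemma rdot_rip_sqr_le X W : X \in U -> W \in U ->
  rdot (A X) (A W) - rdot X W <= d * (fnormR X ^+ 2 + fnormR W ^+ 2) / 2.
Proof.
move=> X_U W_U.
have /andP [lower _] := A_rip (memvB X_U W_U).
have /andP [_ upper] := A_rip (memvD X_U W_U).
rewrite linearB sqr_fnormRB !sqr_fnormRB in lower.
rewrite linearD sqr_fnormRD !sqr_fnormRD in upper.
lra.
Qed.

(* Apply the polarized bound to [|W| X] and [|X| W], which have equal norms. *)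
Lemma rdot_rip_le X W : X \in U -> W \in U ->
  rdot (A X) (A W) - rdot X W <= d * fnormR X * fnormR W.
Proof.
move=> X_U W_U; set x := fnormR X; set w := fnormR W.
have [x0|xn0] := eqVneq x 0.
  by rewrite (fnormR_eq0 x0) linear0 !rdot0l subrr x0 mulr0 mul0r.
have [w0|wn0] := eqVneq w 0.
  by rewrite (fnormR_eq0 w0) linear0 !rdot0r subrr w0 mulr0.
have xw_gt0 : 0 < w * x by rewrite mulr_gt0 // lt_def ?xn0 ?wn0 fnormR_ge0.
have := rdot_rip_sqr_le (memvZ w%:C%C X_U) (memvZ x%:C%C W_U).
rewrite !linearZ /= rdotZl rdotZr rdotZl rdotZr !sqr_fnormRZ -/x -/w.
have -> : w * (x * rdot (A X) (A W)) - w * (x * rdot X W) =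
  (w * x) * (rdot (A X) (A W) - rdot X W) by ring.
have -> : d * (w ^+ 2 * x ^+ 2 + x ^+ 2 * w ^+ 2) / 2 = (w * x) * (d * x * w) by field.
by rewrite ler_pM2l.
Qed.

End RestrictedIsometry.

Section Adjoint.
Variables (R : rcfType) (m n p : nat).

Lemma vdot_mdot (x y : 'cV[R[i]]_p) : vdot x y = mdot x y.
Proof. by rewrite mdotE big_ord1. Qed.

Lemma vnormE (x : 'cV[R[i]]_p) : vnorm x = (fnormR x)%:C%C.
Proof. by rewrite /vnorm vdot_mdot -fnormE. Qed.

Lemma rdot_adjoint (A : 'M[R[i]]_(m, n) -> 'cV[R[i]]_p) Astar :
  is_adjoint A Astar -> forall X y, rdot (A X) y = rdot X (Astar y).
Proof. by move=> adj X y; rewrite rdot.unlock -vdot_mdot adj. Qed.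

Lemma ric_le_rip (A : 'M[R[i]]_(m, n) -> 'cV[R[i]]_p) s c : ric_le A s c ->
  exists2 d : R, 0 <= d /\ d%:C%C <= c & forall X, (\rank X <= s)%N ->
    (1 - d) * fnormR X ^+ 2 <= fnormR (A X) ^+ 2 <= (1 + d) * fnormR X ^+ 2.
Proof.
move=> [dC [dC_ge0 dC_le A_rip _]]; have dC_real := ge0_Re_real dC_ge0.
exists (complex.Re dC); first by rewrite -ler0c -dC_real.
rewrite dC_real in A_rip.
move=> X X_s; have := A_rip X X_s; rewrite vnormE !fnormE -[1 : R[i]]/(1%:C%C).
by rewrite -!rmorphXn -rmorphB -rmorphD -!rmorphM /= !lecR.
Qed.

Variables (A : {linear 'M[R[i]]_(m, n) -> 'cV[R[i]]_p}) (Astar : 'cV[R[i]]_p -> 'M[R[i]]_(m, n)).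
Hypothesis A_adjoint : is_adjoint A Astar.

Lemma fnormR_P_adjoint_sub_le (t : seq 'M[R[i]]_(m, n)) (d : R) D nu :
  0 <= d -> rip_on A <<t>> d -> D \in <<t>>%VS ->
  fnormR (P_ t (Astar (A D + nu)) - D) <= d * fnormR D + Num.sqrt (1 + d) * fnormR nu.
Proof.
move=> d_ge0 A_rip D_t; set Y := Astar _; set E := P_ t Y - D.
have E_t : E \in <<t>>%VS by apply: memvB => //; exact: P_mem.
have E_sqr : fnormR E ^+ 2 = (rdot (A E) (A D) - rdot E D) + rdot (A E) nu.
  have := rdot_P_perp Y E_t; rewrite rdotBl (rdotC E Y) -(rdot_adjoint A_adjoint) rdotDr.
  rewrite sqr_fnormR {1}/E rdotBl (rdotC E D); lra.
have AE_AD := rdot_rip_le A_rip E_t D_t.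
have AE_nu : rdot (A E) nu <= Num.sqrt (1 + d) * fnormR E * fnormR nu.
  apply: le_trans (rdot_le_fnormR _ _) _; rewrite ler_wpM2r ?fnormR_ge0 //.
  exact: (fnormR_rip_le d_ge0 A_rip E_t).
apply: ler_of_sqr_le_mul; first by rewrite addr_ge0 ?mulr_ge0 ?sqrtr_ge0 ?fnormR_ge0.
rewrite E_sqr; lra.
Qed.

Lemma fnormR_Pperp_adjoint_le (s s0 : seq 'M[R[i]]_(m, n)) (d : R) D nu :
  0 <= d -> rip_on A <<s ++ s0>> d -> D \in <<s0>>%VS ->
  fnormR (P_ s0 (Astar (A D + nu))) <= fnormR (P_ s (Astar (A D + nu))) ->
  fnormR (Pperp s D) <= 2 * (d * fnormR D + Num.sqrt (1 + d) * fnormR nu).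
Proof.
move=> d_ge0 A_rip D_s0 greedy.
have s_T : (<<s>> <= <<s ++ s0>>)%VS by rewrite span_cat addvSl.
have s0_T : (<<s0>> <= <<s ++ s0>>)%VS by rewrite span_cat addvSr.
apply: le_trans (fnormR_Pperp_greedy s_T s0_T D_s0 greedy) _.
by rewrite ler_wpM2l // fnormR_P_adjoint_sub_le // (subvP s0_T).
Qed.

End Adjoint.

Lemma real_complex_ratio (R : rcfType) (a b : nat) :
  (a%:R / b%:R : R[i]) = (a%:R / b%:R : R)%:C%C.
Proof. by rewrite rmorphM /= rmorph_nat fmorphV /= rmorph_nat. Qed.

Lemma rip_constants_le (R : rcfType) (d x y : R) :
  0 <= d -> d <= 4%:R / 100%:R -> 0 <= x -> 0 <= y ->
  2 * (d * x + Num.sqrt (1 + d) * y) <= 24%:R / 100%:R * x + 213%:R / 100%:R * y.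
Proof.
move=> d_ge0 d_le x_ge0 y_ge0.
have sqrt_le : Num.sqrt (1 + d) <= 102%:R / 100%:R.
  have c_ge0 : 0 <= 102%:R / 100%:R :> R by rewrite divr_ge0 ?ler0n.
  by rewrite -ler_sqr ?nnegrE ?sqrtr_ge0 // sqr_sqrtr; lra.
have := ler_wpM2r x_ge0 d_le; have := ler_wpM2r y_ge0 sqrt_le; lra.
Qed.

Theorem lemma1 (R : realType) (m n p r : nat)
  (O : 'M[R[i]]_(m, n) -> Prop)
  (A : {linear 'M[R[i]]_(m, n) -> 'cV[R[i]]_p})
  (Astar : 'cV[R[i]]_p -> 'M[R[i]]_(m, n))
  (X0 Xh : 'M[R[i]]_(m, n)) (nu b : 'cV[R[i]]_p) (Psi' : seq 'M[R[i]]_(m, n)) :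
  (1 <= r)%N ->
  atoms O ->
  is_adjoint A Astar ->
  ric_le A (4 * r) (4%:R / 100%:R) ->
  (\rank X0 <= r)%N ->
  b = A X0 + nu ->
  (\rank Xh <= r)%N ->
  admissible O (2 * r) Psi' ->
  (forall Psi, admissible O (2 * r) Psi ->
     fnorm (P_ Psi (Astar (b - A Xh))) <= fnorm (P_ Psi' (Astar (b - A Xh)))) ->
  fnorm (Pperp Psi' (X0 - Xh)) <= 24%:R / 100%:R * fnorm (X0 - Xh) + 213%:R / 100%:R * vnorm nu.
Proof.
move=> _ O_atoms A_adj /ric_le_rip [d [d_ge0]]; rewrite real_complex_ratio lecR => d_le A_rip.
move=> X0_r -> Xh_r [_ Psi'_O Psi'_size] Psi'_max; set D := X0 - Xh.
have residual : A X0 + nu - A Xh = A D + nu by rewrite linearB addrAC.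
rewrite residual in Psi'_max.
have D_r : (\rank D <= 2 * r)%N.
  by rewrite mul2n -addnn (leq_trans (mxrank_add _ _)) // mxrank_opp leq_add.
have [Psi0 [[Psi0_uniq Psi0_O Psi0_size] D_Psi0]] := atoms_cover O_atoms D.
have Psi0_adm : admissible O (2 * r) Psi0 by split=> //; exact: leq_trans D_r.
have T_rip : rip_on A <<Psi' ++ Psi0>> d.
  apply: rip_on_span O_atoms _ _ A_rip => [w|].
    by rewrite mem_cat => /orP [/Psi'_O|/Psi0_O].
  by rewrite size_cat (mulnDl 2 2 r : 4 * r = _)%N leq_add // (leq_trans Psi0_size).
have greedy := Psi'_max Psi0 Psi0_adm; rewrite !fnormE lecR in greedy.
rewrite !fnormE vnormE !real_complex_ratio -!rmorphM -rmorphD lecR.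
apply: le_trans (fnormR_Pperp_adjoint_le A_adj d_ge0 T_rip D_Psi0 greedy) _.
by apply: rip_constants_le; rewrite ?fnormR_ge0.
Qed.
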